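(* For every integer $r\ge 0$, there do not exist $x,y,z,w\in\mathbb{N}=\{0,1,2,\dots\}$ such that $$x^2+y^2+z^2+w^2=4^{2r+1}\cdot 6\quad\text{and}\quad 3x+10y\in\mathcal{S}.$$
   Context: $\mathcal{S}=\{x^2: x\in\mathbb{Z}\}$ denotes the set of integer squares. (Note that $(a,b)=(3,10)$ satisfies $\gcd(a,b)=1$ and $a^2+b^2=109$ is prime, so this shows that the hypothesis $\operatorname{ord}_2(n)\le C$ cannot be dropped from the statement that sufficiently large $n$ admit such a representation.) *)

From mathcomp Require Import all_boot.
(* The set S = { x^2 : x in Z } of integer squares, restricted to naturals:
   a natural number n is in S iff n = k^2 for some integer k, equivalently
   for some natural k (take k = |integer witness|). *)
Definition is_square (n : nat) : Prop := exists k : nat, n = k ^ 2.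

From mathcomp Require Import all_boot zify.

(* Squares are 0 or 4 mod 8 for even and 1 mod 8 for odd numbers, so a sum of
   four squares divisible by 8 has all four terms even.  Hence every solution
   of x^2 + y^2 + z^2 + w^2 = 4^k * 6 is 2^k times a solution for 6, which is a
   permutation of (2, 1, 1, 0).  For k = 2r + 1 this gives
   3x + 10y = 4^r * 2(3a + 10b), and removing the square factor 4^r leaves
   2(3a + 10b), which is one of 6, 12, 20, 26, 40, 46, 52 and never a square. *)

Lemma sqrn_mod8 x : x ^ 2 = (x %% 4) ^ 2 %[mod 8].
Proof.
rewrite {1}(divn_eq x 4); move: (x %/ 4) (x %% 4) => q r.
have -> : (q * 4 + r) ^ 2 = (2 * q ^ 2 + q * r) * 8 + r ^ 2 by nia.
by rewrite modnMDl.
Qed.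

Lemma sum4_sqr_mod8_even x y z w :
  x ^ 2 + y ^ 2 + z ^ 2 + w ^ 2 = 0 %[mod 8] ->
  [&& ~~ odd x, ~~ odd y, ~~ odd z & ~~ odd w].
Proof.
have odd4 : odd 4 = false by [].
rewrite -(odd_mod x odd4) -(odd_mod y odd4) -(odd_mod z odd4) -(odd_mod w odd4).
have -> : x ^ 2 + y ^ 2 + z ^ 2 + w ^ 2 =
          (x %% 4) ^ 2 + (y %% 4) ^ 2 + (z %% 4) ^ 2 + (w %% 4) ^ 2 %[mod 8].
  move: (sqrn_mod8 x) (sqrn_mod8 y) (sqrn_mod8 z) (sqrn_mod8 w).
  move: (x ^ 2) (y ^ 2) (z ^ 2) (w ^ 2).
  move: ((x %% 4) ^ 2) ((y %% 4) ^ 2) ((z %% 4) ^ 2) ((w %% 4) ^ 2).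
  lia.
have := ltn_pmod x (isT : 0 < 4); have := ltn_pmod y (isT : 0 < 4).
have := ltn_pmod z (isT : 0 < 4); have := ltn_pmod w (isT : 0 < 4).
move: (x %% 4) (y %% 4) (z %% 4) (w %% 4) => a b c d.
by case: a => [|[|[|[|?]]]] //; case: b => [|[|[|[|?]]]] //;
   case: c => [|[|[|[|?]]]] //; case: d => [|[|[|[|?]]]].
Qed.

Lemma even_double_half n : ~~ odd n -> n = 2 * n./2.
Proof. by move=> /negbTE even_n; rewrite -[n in LHS]odd_double_half even_n mul2n. Qed.

Lemma sum4_sqr_halve {m x y z w : nat} :
  ~~ odd m -> x ^ 2 + y ^ 2 + z ^ 2 + w ^ 2 = 4 * m ->
  exists a b c d, [/\ x = 2 * a, y = 2 * b, z = 2 * c, w = 2 * d &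
                      a ^ 2 + b ^ 2 + c ^ 2 + d ^ 2 = m].
Proof.
move=> even_m sum_eq.
have /sum4_sqr_mod8_even/and4P[/even_double_half ex /even_double_half ey
                                /even_double_half ez /even_double_half ew] :
    x ^ 2 + y ^ 2 + z ^ 2 + w ^ 2 = 0 %[mod 8].
  by rewrite sum_eq (even_double_half _ even_m); lia.
exists x./2, y./2, z./2, w./2; split=> //.
move: sum_eq; rewrite {1}ex {1}ey {1}ez {1}ew !expnMn.
move: (x./2 ^ 2) (y./2 ^ 2) (z./2 ^ 2) (w./2 ^ 2); lia.
Qed.

Lemma sum4_sqr_4expM {k n x y z w : nat} :
  ~~ odd n -> x ^ 2 + y ^ 2 + z ^ 2 + w ^ 2 = 4 ^ k * n ->
  exists a b c d, [/\ x = 2 ^ k * a, y = 2 ^ k * b, z = 2 ^ k * c,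
                      w = 2 ^ k * d & a ^ 2 + b ^ 2 + c ^ 2 + d ^ 2 = n].
Proof.
move=> even_n; elim: k x y z w => [|k IHk] x y z w sum_eq.
  by exists x, y, z, w; rewrite !mul1n; rewrite mul1n in sum_eq.
have even_4k_n : ~~ odd (4 ^ k * n) by rewrite oddM negb_and even_n orbT.
have {}sum_eq : x ^ 2 + y ^ 2 + z ^ 2 + w ^ 2 = 4 * (4 ^ k * n).
  by rewrite sum_eq expnS mulnA.
have [a [b [c [d [-> -> -> -> /IHk]]]]] := sum4_sqr_halve even_4k_n sum_eq.
move=> [a' [b' [c' [d' [-> -> -> -> sum_n]]]]].
by exists a', b', c', d'; split=> //; rewrite expnS mulnA.
Qed.

Lemma is_square_4M n : is_square (4 * n) -> is_square n.
Proof.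
move=> [k sq_k]; exists k./2.
have /even_double_half ek : ~~ odd k.
  by apply/negP => odd_k; move: (oddX k 2); rewrite -sq_k odd_k oddM.
by move: sq_k; rewrite {1}ek expnMn; move: (k./2 ^ 2); lia.
Qed.

Lemma is_square_4expM r n : is_square (4 ^ r * n) -> is_square n.
Proof.
elim: r => [|r IHr]; first by rewrite mul1n.
by rewrite expnS -mulnA => /is_square_4M.
Qed.

Lemma sum4_sqr_6_not_square a b c d :
  a ^ 2 + b ^ 2 + c ^ 2 + d ^ 2 = 6 -> ~ is_square (2 * (3 * a + 10 * b)).
Proof.
move=> sum_eq [j sq_j].
have lt3 t : t ^ 2 <= 6 -> t < 3.
  by move=> le6; rewrite -(ltn_exp2r _ _ (isT : 0 < 2)); apply: leq_ltn_trans le6 _.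
have [ha hb hc hd] : [/\ a < 3, b < 3, c < 3 & d < 3].
  by split; apply: lt3; move: sum_eq; move: (a ^ 2) (b ^ 2) (c ^ 2) (d ^ 2); lia.
have hj : j < 8.
  by rewrite -(ltn_exp2r _ _ (isT : 0 < 2)) -sq_j; lia.
move: ha hb hc hd hj sum_eq sq_j.
by case: a => [|[|[|?]]] //; case: b => [|[|[|?]]] //;
   case: c => [|[|[|?]]] //; case: d => [|[|[|?]]] //;
   case: j => [|[|[|[|[|[|[|[|?]]]]]]]].
Qed.

Theorem mainTheorem3 (r : nat) :
  ~ (exists x y z w : nat,
        x ^ 2 + y ^ 2 + z ^ 2 + w ^ 2 = 4 ^ (2 * r + 1) * 6 /\
        is_square (3 * x + 10 * y)).
Proof.
move=> [x [y [z [w [sum_eq sq]]]]].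
have [a [b [c [d [ex ey _ _ sum6]]]]] := sum4_sqr_4expM (isT : ~~ odd 6) sum_eq.
have : is_square (4 ^ r * (2 * (3 * a + 10 * b))).
  suff -> : 4 ^ r * (2 * (3 * a + 10 * b)) = 3 * x + 10 * y by [].
  by rewrite ex ey expnD expnM expn1 (_ : 2 ^ 2 = 4) //; move: (4 ^ r); lia.
by move/is_square_4expM; apply: sum4_sqr_6_not_square sum6.
Qed.
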